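(* For any $n<\omega$, a partial type $p(x)$ has dp-rank $\le n$ if and only if, for every formula $\varphi(x;y)$, the local dp-rank of $\varphi$ with respect to $p$ is $\le n$.
   Context: $T$ is a complete first-order theory and $\mathfrak{C}$ a monster model; $\mathfrak{C}_y$ denotes the $|y|$-tuples from $\mathfrak{C}$. ''Indiscernible sequence'' means an order-indiscernible (over $\emptyset$) sequence. For $C\subseteq\mathbb{R}$, $\sim_C$ is the equivalence relation on $\mathbb{Q}$ given by $i\sim_C j$ iff for all $c\in C$, ($c\le i \Leftrightarrow c\le j$) and ($i\le c\Leftrightarrow j\le c$). A partial type $p(x)$ has dp-rank $\le n$ if for every $a\models p$ and every indiscernible sequence $\langle b_i: i\in\mathbb{Q}\rangle$ (of tuples of any finite length) there is $C\subseteq\mathbb{R}$ with $|C|\le n$ such that for all $i,j\in\mathbb{Q}$ with $i\sim_C j$, $\mathrm{tp}(b_i/a)=\mathrm{tp}(b_j/a)$. The local dp-rank of a formula $\varphi(x;y)$ with respect to $p$ is $\le n$ if for every $a\models p$ and every indiscernible sequence $\langle b_i: i\in\mathbb{Q}\rangle$ in $\mathfrak{C}_y$ there is $C\subseteq\mathbb{R}$ with $|C|\le n$ such that for all $i,j\in\mathbb{Q}$ with $i\sim_C j$, $\models \varphi(a;b_i)\leftrightarrow\varphi(a;b_j)$. *)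

From Stdlib Require Import Reals QArith Qcanon Qreals List Arith.
From Stdlib Require Fin.
Import ListNotations.
Local Open Scope nat_scope.

Record Lang : Type := {
  fsym : Type;  fun_ar : fsym -> nat;
  rsym : Type;  rel_ar : rsym -> nat }.

Inductive term (L : Lang) : Type :=
| tvar : nat -> term L
| tapp : forall f : fsym L, (Fin.t (fun_ar L f) -> term L) -> term L.
Arguments tvar {L} _.
Arguments tapp {L} f _.

(* Variable 0 is bound by the innermost quantifier (de Bruijn indices). *)
Inductive formula (L : Lang) : Type :=
| FEq  : term L -> term L -> formula L
| FRel : forall r : rsym L, (Fin.t (rel_ar L r) -> term L) -> formula L
| FNeg : formula L -> formula L
| FAnd : formula L -> formula L -> formula L
| FOr  : formula L -> formula L -> formula L
| FAll : formula L -> formula L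
| FEx  : formula L -> formula L.
Arguments FEq {L} _ _.  Arguments FRel {L} r _.  Arguments FNeg {L} _.
Arguments FAnd {L} _ _. Arguments FOr {L} _ _.  Arguments FAll {L} _.
Arguments FEx {L} _.

Record Structure (L : Lang) : Type := {
  dom  :> Type;
  funs : forall f : fsym L, (Fin.t (fun_ar L f) -> dom) -> dom;
  rels : forall r : rsym L, (Fin.t (rel_ar L r) -> dom) -> Prop }.
Arguments funs {L} _ f _.
Arguments rels {L} _ r _.

Definition scons {A : Type} (d : A) (e : nat -> A) : nat -> A :=
  fun i => match i with 0 => d | S i' => e i' end.

Fixpoint teval {L} (M : Structure L) (e : nat -> M) (t : term L) : M :=
  match t with
  | tvar i => e i
  | tapp f ts => funs M f (fun j => teval M e (ts j))
  end.

Fixpoint sat {L} (M : Structure L) (e : nat -> M) (phi : formula L) : Prop :=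
  match phi with
  | FEq t1 t2 => teval M e t1 = teval M e t2
  | FRel r ts => rels M r (fun j => teval M e (ts j))
  | FNeg p => ~ sat M e p
  | FAnd p q => sat M e p /\ sat M e q
  | FOr p q => sat M e p \/ sat M e q
  | FAll p => forall d : M, sat M (scons d e) p
  | FEx p => exists d : M, sat M (scons d e) p
  end.

Fixpoint tbound {L} (N : nat) (t : term L) : Prop :=
  match t with
  | tvar i => i < N
  | tapp f ts => forall j, tbound N (ts j)
  end.

Fixpoint fbound {L} (N : nat) (phi : formula L) : Prop :=
  match phi with
  | FEq t1 t2 => tbound N t1 /\ tbound N t2
  | FRel r ts => forall j, tbound N (ts j)
  | FNeg p => fbound N p
  | FAnd p q | FOr p q => fbound N p /\ fbound N q
  | FAll p | FEx p => fbound (S N) p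
  end.

(** Tuples are functions nat -> M of which only the first (length) entries
    matter.  [env k a c] places the k-tuple a in variables 0..k-1 and c
    in variables k, k+1, ... *)
Definition env {A : Type} (k : nat) (a c : nat -> A) : nat -> A :=
  fun i => if i <? k then a i else c (i - k).

(** Partial types p(x), |x| = k, with parameters from M: a set of pairs
    (psi, c), psi a formula whose variables 0..k-1 are x and whose remaining
    variables are instantiated by the parameters c. *)
Definition ptype {L} (M : Structure L) : Type := formula L -> (nat -> M) -> Prop.

Definition realizes {L} (M : Structure L) (k : nat) (p : ptype M) (a : nat -> M) : Prop :=
  forall psi c, p psi c -> sat M (env k a c) psi.

Definition seq_env {L} (M : Structure L) (m : nat) (I : nat -> Qc)
  (b : Qc -> nat -> M) : nat -> M :=
  fun l => b (I (l / m)) (l mod m).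

Definition increasing_upto (N : nat) (I : nat -> Qc) : Prop :=
  forall s t, s < t -> t < N -> Qclt (I s) (I t).

Definition indiscernible {L} (M : Structure L) (m : nat) (b : Qc -> nat -> M) : Prop :=
  forall (N : nat) (psi : formula L), fbound (N * m) psi ->
  forall I J : nat -> Qc, increasing_upto N I -> increasing_upto N J ->
  (sat M (seq_env M m I b) psi <-> sat M (seq_env M m J b) psi).

Definition QcR (q : Qc) : R := Q2R (this q).

Definition simC (C : list R) (i j : Qc) : Prop :=
  forall c, In c C ->
    ((c <= QcR i)%R <-> (c <= QcR j)%R) /\ ((QcR i <= c)%R <-> (QcR j <= c)%R).

Definition same_type {L} (M : Structure L) (k m : nat) (a bi bj : nat -> M) : Prop :=
  forall psi : formula L, fbound (k + m) psi ->
    (sat M (env k a bi) psi <-> sat M (env k a bj) psi).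

Definition dp_rank_le {L} (M : Structure L) (k : nat) (p : ptype M) (n : nat) : Prop :=
  forall a : nat -> M, realizes M k p a ->
  forall (m : nat) (b : Qc -> nat -> M), indiscernible M m b ->
  exists C : list R, length C <= n /\
    forall i j : Qc, simC C i j -> same_type M k m a (b i) (b j).

Definition local_dp_rank_le {L} (M : Structure L) (k m : nat) (phi : formula L)
  (p : ptype M) (n : nat) : Prop :=
  forall a : nat -> M, realizes M k p a ->
  forall b : Qc -> nat -> M, indiscernible M m b ->
  exists C : list R, length C <= n /\
    forall i j : Qc, simC C i j ->
      (sat M (env k a (b i)) phi <-> sat M (env k a (b j)) phi).

From Stdlib Require Import Reals QArith Qcanon Qreals List Arith.
From Stdlib Require Import Lia Lra Classical ClassicalEpsilon FunctionalExtensionality.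

(** The forward direction is immediate: a set C witnessing dp-rank <= n for a
    and (b_i) also witnesses local dp-rank <= n for every phi.

    For the converse fix a |= p and an indiscernible (b_i).  Call a real c a
    breakpoint if some formula psi(x;y) changes its truth value at (a, b_q)
    for rationals q arbitrarily close to c.  The heart of the proof is that
    there are no n+1 breakpoints c_0 < ... < c_n: otherwise choose formulas
    psi_j breaking at c_j, squeeze a copy of Q into a small neighbourhood of
    each c_j by an increasing map h_j, and form the indiscernible sequence
    b'_q = b_{h_0 q} ... b_{h_n q}.  The parity (xor) of the psi_j(x; j-th block)
    must then change inside n+1 disjoint windows of Q, so its local witness set
    has at least n+1 points.  Hence all breakpoints lie in a list B of length
    <= n, and for any psi the points of its local witness set outside B can be
    dropped, since psi is locally constant around them; so B witnesses
    dp-rank <= n. *)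

Local Open Scope nat_scope.

(** * Renaming and coincidence for formulas *)

Section Syntax.
Context {L : Lang}.

Fixpoint trename (s : nat -> nat) (t : term L) : term L :=
  match t with
  | tvar i => tvar (s i)
  | tapp f ts => tapp f (fun j => trename s (ts j))
  end.

Definition upr (s : nat -> nat) : nat -> nat :=
  fun i => match i with 0 => 0 | S i' => S (s i') end.

Fixpoint frename (s : nat -> nat) (phi : formula L) : formula L :=
  match phi with
  | FEq t1 t2 => FEq (trename s t1) (trename s t2)
  | FRel r ts => FRel r (fun j => trename s (ts j))
  | FNeg p => FNeg (frename s p)
  | FAnd p q => FAnd (frename s p) (frename s q)
  | FOr p q => FOr (frename s p) (frename s q)
  | FAll p => FAll (frename (upr s) p)
  | FEx p => FEx (frename (upr s) p)
  end.

Lemma teval_rename (M : Structure L) t : forall s (e : nat -> M),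
  teval M e (trename s t) = teval M (fun i => e (s i)) t.
Proof.
  induction t as [i|f ts IH]; intros s e; simpl; auto.
  f_equal. apply functional_extensionality. intro j. apply IH.
Qed.

Lemma scons_upr (M : Structure L) (d : M) (e : nat -> M) s :
  (fun i => scons d e (upr s i)) = scons d (fun i => e (s i)).
Proof. apply functional_extensionality; intros [|i]; reflexivity. Qed.

Lemma sat_rename (M : Structure L) phi : forall s (e : nat -> M),
  sat M e (frename s phi) <-> sat M (fun i => e (s i)) phi.
Proof.
  induction phi; intros s e; simpl.
  - rewrite !teval_rename. tauto.
  - replace (fun j => teval M e (trename s (t j)))
      with (fun j => teval M (fun i => e (s i)) (t j)); [tauto|].
    apply functional_extensionality; intro j; now rewrite teval_rename.
  - rewrite IHphi; tauto.
  - rewrite IHphi1, IHphi2; tauto.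
  - rewrite IHphi1, IHphi2; tauto.
  - split; intros H d; specialize (H d); rewrite IHphi, scons_upr in *; exact H.
  - split; intros [d H]; exists d; rewrite IHphi, scons_upr in *; exact H.
Qed.

Lemma teval_agree (M : Structure L) t : forall N (e e' : nat -> M),
  tbound N t -> (forall v, v < N -> e v = e' v) -> teval M e t = teval M e' t.
Proof.
  induction t as [i|f ts IH]; intros N e e' Hb He; simpl in *; auto.
  f_equal. apply functional_extensionality. intro j. eapply IH; eauto.
Qed.

Lemma sat_agree (M : Structure L) phi : forall N (e e' : nat -> M),
  fbound N phi -> (forall v, v < N -> e v = e' v) -> (sat M e phi <-> sat M e' phi).
Proof.
  induction phi; intros N e e' Hb He; simpl in *.
  - destruct Hb. rewrite (teval_agree M t N e e'), (teval_agree M t0 N e e'); tauto.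
  - replace (fun j => teval M e (t j)) with (fun j => teval M e' (t j)); [tauto|].
    apply functional_extensionality; intro j; symmetry; eapply teval_agree; eauto.
  - rewrite (IHphi N e e'); tauto.
  - destruct Hb. rewrite (IHphi1 N e e'), (IHphi2 N e e'); tauto.
  - destruct Hb. rewrite (IHphi1 N e e'), (IHphi2 N e e'); tauto.
  - split; intros H d; specialize (H d);
      (eapply (IHphi (S N)); [eauto| |exact H]); intros [|v] Hv; simpl; auto;
      first [apply He; lia | symmetry; apply He; lia].
  - split; intros [d H]; exists d;
      (eapply (IHphi (S N)); [eauto| |exact H]); intros [|v] Hv; simpl; auto;
      first [apply He; lia | symmetry; apply He; lia].
Qed.

Lemma tbound_rename t : forall s N N', tbound N t -> (forall v, v < N -> s v < N') ->
  tbound N' (trename s t).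
Proof. induction t as [i|f ts IH]; intros s N N' Hb Hs; simpl in *; eauto. Qed.

Lemma fbound_rename phi : forall s N N', fbound N phi -> (forall v, v < N -> s v < N') ->
  fbound N' (frename s phi).
Proof.
  induction phi; intros s N N' Hb Hs; simpl in *;
    try (destruct Hb; split); eauto using tbound_rename;
    try (intro j; eapply tbound_rename; eauto; fail);
    (eapply IHphi; eauto; intros [|v] Hv; simpl; [lia|]; specialize (Hs v); lia).
Qed.

End Syntax.

(** * Parities *)

Definition xor (A B : Prop) : Prop := (A /\ ~ B) \/ (~ A /\ B).

Fixpoint parity (P : nat -> Prop) (N : nat) : Prop :=
  match N with 0 => False | S N => xor (parity P N) (P N) end.

Lemma parity_ext P Q N :
  (forall l, l < N -> (P l <-> Q l)) -> (parity P N <-> parity Q N).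
Proof.
  induction N as [|N IH]; intro H; simpl; [tauto|]. unfold xor.
  rewrite IH, (H N); [tauto | lia | intros; apply H; lia].
Qed.

Lemma parity_single_change P Q N j : j < N ->
  (forall l, l < N -> l <> j -> (P l <-> Q l)) -> ~ (P j <-> Q j) ->
  ~ (parity P N <-> parity Q N).
Proof.
  induction N as [|N IH]; intros Hj Hoth Hdiff; [lia|]. simpl; unfold xor.
  destruct (Nat.eq_dec j N) as [->|Hne].
  - assert (E : parity P N <-> parity Q N)
      by (apply parity_ext; intros l Hl; apply Hoth; lia).
    destruct (classic (P N)), (classic (Q N)), (classic (parity P N)),
      (classic (parity Q N)); tauto.
  - assert (E : ~ (parity P N <-> parity Q N))
      by (apply IH; [lia | intros; apply Hoth; lia | exact Hdiff]).
    assert (EN : P N <-> Q N) by (apply Hoth; lia).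
    destruct (classic (P N)), (classic (Q N)), (classic (parity P N)),
      (classic (parity Q N)); tauto.
Qed.

Section ParityFormula.
Context {L : Lang}.

Definition FFalse : formula L := FNeg (FAll (FEq (tvar 0) (tvar 0))).
Definition Fxor (p q : formula L) : formula L := FOr (FAnd p (FNeg q)) (FAnd (FNeg p) q).

Fixpoint Fparity (g : nat -> formula L) (N : nat) : formula L :=
  match N with 0 => FFalse | S N => Fxor (Fparity g N) (g N) end.

Lemma sat_Fparity (M : Structure L) (e : nat -> M) g N :
  sat M e (Fparity g N) <-> parity (fun l => sat M e (g l)) N.
Proof.
  induction N as [|N IH]; simpl.
  - split; [intro H; apply H; reflexivity | contradiction].
  - unfold xor. rewrite IH. tauto.
Qed.

Lemma fbound_Fparity g N B : (forall l, l < N -> fbound B (g l)) -> fbound B (Fparity g N).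
Proof.
  induction N as [|N IH]; intros H; simpl.
  - lia.
  - repeat split; try apply IH; try apply H; intros; try apply H; lia.
Qed.

End ParityFormula.

(** * Interleaving an indiscernible sequence with itself *)

Lemma divmod_unique (d l s : nat) : s < d -> (l * d + s) / d = l /\ (l * d + s) mod d = s.
Proof.
  intro H. split.
  - rewrite Nat.add_comm, Nat.div_add by lia. rewrite Nat.div_small by lia. lia.
  - rewrite Nat.add_comm, Nat.Div0.mod_add. apply Nat.mod_small; lia.
Qed.

Section Interleave.
Context {L : Lang} (M : Structure L).

(* The sequence whose q-th element is the concatenation of the m-tuples
   b (h 0 q), b (h 1 q), ...; block l of a tuple occupies positions l*m .. l*m+m-1. *)
Definition interleave (m : nat) (b : Qc -> nat -> M) (h : nat -> Qc -> Qc) : Qc -> nat -> M :=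
  fun q t => b (h (t / m) q) (t mod m).

(* Position v = s*(K*m) + l*m + r of a sequence of K*m-tuples (element s,
   block l, coordinate r) is position (l*N + s)*m + r of a sequence of m-tuples. *)
Definition interleave_index (m K N v : nat) : nat :=
  ((v mod (K * m)) / m * N + v / (K * m)) * m + (v mod (K * m)) mod m.

Definition interleave_points (N : nat) (h : nat -> Qc -> Qc) (I : nat -> Qc) : nat -> Qc :=
  fun t => h (t / N) (I (t mod N)).

Lemma seq_env_interleave m K N b h (I : nat -> Qc) v : v < N * (K * m) ->
  seq_env M (K * m) I (interleave m b h) v =
    seq_env M m (interleave_points N h I) b (interleave_index m K N v) /\
  interleave_index m K N v < K * N * m.
Proof.
  intro Hv. assert (HKm : 0 < K * m) by nia.
  unfold seq_env, interleave, interleave_index, interleave_points.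
  set (s := v / (K * m)). set (l := (v mod (K * m)) / m). set (r := (v mod (K * m)) mod m).
  assert (Hs : s < N) by (apply Nat.Div0.div_lt_upper_bound; lia).
  assert (Hr : r < m) by (apply Nat.mod_upper_bound; lia).
  assert (Hl : l < K).
  { apply Nat.Div0.div_lt_upper_bound. pose proof (Nat.mod_upper_bound v (K * m)). lia. }
  destruct (divmod_unique m (l * N + s) r Hr) as [D1 D2]. rewrite D1, D2.
  destruct (divmod_unique N l s Hs) as [D3 D4]. rewrite D3, D4.
  split; [reflexivity|].
  assert (l * N + s < K * N) by nia. nia.
Qed.

Section Blocks.
Variables (K : nat) (h : nat -> Qc -> Qc).
Hypothesis h_increasing : forall l q q', l < K -> Qclt q q' -> Qclt (h l q) (h l q').
Hypothesis h_ordered : forall l l' q q', l < l' -> l' < K -> Qclt (h l q) (h l' q').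

Lemma increasing_interleave_points N I :
  increasing_upto N I -> increasing_upto (K * N) (interleave_points N h I).
Proof.
  intros HI t t' Htt' Ht'. unfold interleave_points.
  assert (HN : 0 < N) by nia.
  pose proof (Nat.div_mod t N ltac:(lia)). pose proof (Nat.div_mod t' N ltac:(lia)).
  pose proof (Nat.mod_upper_bound t N ltac:(lia)).
  pose proof (Nat.mod_upper_bound t' N ltac:(lia)).
  assert (Hl' : t' / N < K) by (apply Nat.Div0.div_lt_upper_bound; lia).
  assert (Hle : t / N <= t' / N) by (apply Nat.Div0.div_le_mono; lia).
  destruct (Nat.eq_dec (t / N) (t' / N)) as [Heq|Hne].
  - rewrite Heq. apply h_increasing; auto. apply HI; nia.
  - apply h_ordered; lia.
Qed.

Lemma indiscernible_interleave m b :
  indiscernible M m b -> indiscernible M (K * m) (interleave m b h).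
Proof.
  intros Hb N psi Hpsi I J HI HJ.
  assert (Hre : forall I, sat M (seq_env M (K * m) I (interleave m b h)) psi <->
      sat M (seq_env M m (interleave_points N h I) b) (frename (interleave_index m K N) psi)).
  { intro I0. rewrite sat_rename. apply (sat_agree M psi (N * (K * m))); auto.
    intros v Hv. apply seq_env_interleave; auto. }
  rewrite !Hre. apply (Hb (K * N)); try apply increasing_interleave_points; auto.
  apply fbound_rename with (N := N * (K * m)); auto.
  intros v Hv. apply (seq_env_interleave m K N b h I v Hv).
Qed.

End Blocks.

Definition block_shift (k m l : nat) (v : nat) : nat := if v <? k then v else v + l * m.

Lemma fbound_block_shift k m K l (psi : formula L) : fbound (k + m) psi -> l < K ->
  fbound (k + K * m) (frename (block_shift k m l) psi).
Proof.
  intros Hpsi Hl. apply fbound_rename with (N := k + m); auto.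
  intros v Hv. unfold block_shift. destruct (Nat.ltb_spec v k); nia.
Qed.

Lemma sat_block_shift k m l (a : nat -> M) (B : nat -> nat -> M) psi : fbound (k + m) psi ->
  (sat M (env k a (fun t => B (t / m) (t mod m))) (frename (block_shift k m l) psi) <->
   sat M (env k a (B l)) psi).
Proof.
  intro Hpsi. rewrite sat_rename. apply (sat_agree M psi (k + m) _ _ Hpsi).
  intros v Hv. unfold env, block_shift. destruct (Nat.ltb_spec v k) as [Hvk|Hvk].
  - destruct (Nat.ltb_spec v k); [reflexivity|lia].
  - destruct (Nat.ltb_spec (v + l * m) k); [lia|].
    replace (v + l * m - k) with (l * m + (v - k)) by lia.
    destruct (divmod_unique m l (v - k) ltac:(lia)) as [D1 D2]. rewrite D1, D2. reflexivity.
Qed.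

End Interleave.

(** * Rationals, reals and the relation ~_C *)

Section Reals.
Local Open Scope R_scope.

Lemma QcR_Q2Qc x : QcR (Q2Qc x) = Q2R x.
Proof. unfold QcR. simpl. apply Qeq_eqR. apply Qred_correct. Qed.

Lemma Qclt_R (x y : Qc) : QcR x < QcR y -> Qclt x y.
Proof. intro H. unfold Qclt. apply Rlt_Qlt. exact H. Qed.

Lemma Q2R_inject n : Q2R (inject_Z (Z.of_nat n)) = INR n.
Proof. unfold Q2R, inject_Z; simpl. rewrite INR_IZR_INZ. simpl. lra. Qed.

Lemma Q2R_1 : Q2R 1 = 1.
Proof. unfold Q2R; simpl. lra. Qed.

Lemma Q_dense (x y : R) : x < y -> exists q : Q, x < Q2R q < y.
Proof.
  intro H.
  destruct (archimed (/ (y - x))) as [Hn _].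
  set (z := up (/ (y - x))) in *.
  assert (Hz : (0 < z)%Z).
  { apply lt_IZR. assert (0 < / (y - x)) by (apply Rinv_0_lt_compat; lra). simpl; lra. }
  destruct (archimed (x * IZR z)) as [H1 H2].
  exists (up (x * IZR z) # Z.to_pos z).
  unfold Q2R; simpl. rewrite Z2Pos.id by lia.
  assert (HzR : 0 < IZR z) by (apply IZR_lt; lia).
  assert (Hyx : (y - x) * IZR z > 1).
  { assert (/ (y - x) * (y - x) = 1) by (field; lra).
    assert (0 < y - x) by lra. nra. }
  split; apply (Rmult_lt_reg_r (IZR z)); auto; rewrite Rmult_assoc, Rinv_l by lra; lra.
Qed.

Lemma Qc_dense (x y : R) : x < y -> exists q : Qc, x < QcR q < y.
Proof. intro H. destruct (Q_dense x y H) as [q Hq]. exists (Q2Qc q). now rewrite QcR_Q2Qc. Qed.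

(** An increasing bijection of R onto (-1, 1), defined on Q by the same formula. *)

Definition Gq (x : Q) : Q := if Qle_bool 0 x then x / (1 + x) else x / (1 - x).
Definition Gr (y : R) : R := if Rle_dec 0 y then y / (1 + y) else y / (1 - y).

Lemma Q2R_Gq x : Q2R (Gq x) = Gr (Q2R x).
Proof.
  assert (Q2R0 : Q2R 0 = 0) by (unfold Q2R; simpl; lra).
  unfold Gq, Gr. destruct (Qle_bool 0 x) eqn:E.
  - apply Qle_bool_iff, Qle_Rle in E. rewrite Q2R0 in E.
    destruct (Rle_dec 0 (Q2R x)); [|lra].
    rewrite Q2R_div, Q2R_plus, Q2R_1; [reflexivity|].
    intro Hq. apply Qeq_eqR in Hq. rewrite Q2R_plus, Q2R_1, Q2R0 in Hq. lra.
  - assert (Hx : Q2R x < 0).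
    { assert (~ (0 <= x)%Q) by (intro Hq; apply Qle_bool_iff in Hq; congruence).
      apply Qnot_le_lt, Qlt_Rlt in H. rewrite Q2R0 in H. exact H. }
    destruct (Rle_dec 0 (Q2R x)); [lra|].
    rewrite Q2R_div, Q2R_minus, Q2R_1; [reflexivity|].
    intro Hq. apply Qeq_eqR in Hq. rewrite Q2R_minus, Q2R_1, Q2R0 in Hq. lra.
Qed.

Lemma Gr_bounds y : -1 < Gr y < 1.
Proof.
  unfold Gr; destruct (Rle_dec 0 y).
  - assert (y / (1 + y) * (1 + y) = y) by (field; lra). nra.
  - assert (y / (1 - y) * (1 - y) = y) by (field; lra). nra.
Qed.

Lemma Gr_mono y1 y2 : y1 < y2 -> Gr y1 < Gr y2.
Proof.
  intro H. unfold Gr; destruct (Rle_dec 0 y1); destruct (Rle_dec 0 y2); try lra.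
  - assert (E : y2 / (1 + y2) - y1 / (1 + y1) = (y2 - y1) / ((1 + y1) * (1 + y2)))
      by (field; lra).
    assert (0 < (y2 - y1) / ((1 + y1) * (1 + y2))) by (apply Rdiv_lt_0_compat; nra). lra.
  - assert (E : y2 / (1 + y2) - y1 / (1 - y1)
                = (y2 - y1 - 2 * y1 * y2) / ((1 - y1) * (1 + y2))) by (field; lra).
    assert (0 < (y2 - y1 - 2 * y1 * y2) / ((1 - y1) * (1 + y2)))
      by (apply Rdiv_lt_0_compat; nra). lra.
  - assert (E : y2 / (1 - y2) - y1 / (1 - y1) = (y2 - y1) / ((1 - y1) * (1 - y2)))
      by (field; lra).
    assert (0 < (y2 - y1) / ((1 - y1) * (1 - y2))) by (apply Rdiv_lt_0_compat; nra). lra.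
Qed.

Lemma Gr_big y : 9 <= y -> 9/10 <= Gr y.
Proof.
  intro H. unfold Gr; destruct (Rle_dec 0 y); try lra.
  assert (y / (1 + y) * (1 + y) = y) by (field; lra). nra.
Qed.

Lemma Gr_small y : y <= -9 -> Gr y <= - (9/10).
Proof.
  intro H. unfold Gr; destruct (Rle_dec 0 y); try lra.
  assert (y / (1 - y) * (1 - y) = y) by (field; lra). nra.
Qed.

Lemma Gr_0 : Gr 0 = 0.
Proof. unfold Gr; destruct (Rle_dec 0 0); [field|lra]. Qed.
Lemma Gr_1 : Gr 1 = 1/2.
Proof. unfold Gr; destruct (Rle_dec 0 1); [field|lra]. Qed.
Lemma Gr_m1 : Gr (-1) = -(1/2).
Proof. unfold Gr; destruct (Rle_dec 0 (-1)); [lra|field]. Qed.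

Lemma simC_eq C i j : QcR i = QcR j -> simC C i j.
Proof. intros H c _. rewrite H. tauto. Qed.

Lemma simC_sep C i j :
  (forall c, In c C -> (c < QcR i /\ c < QcR j) \/ (QcR i < c /\ QcR j < c)) -> simC C i j.
Proof. intros H c Hc. specialize (H c Hc). split; split; intro; lra. Qed.

Lemma not_simC C i j : ~ simC C i j ->
  exists c, In c C /\ ((QcR i <= c <= QcR j) \/ (QcR j <= c <= QcR i)).
Proof.
  intro H. apply NNPP. intro H'. apply H. apply simC_sep. intros c Hc.
  destruct (Rlt_le_dec c (QcR i)); destruct (Rlt_le_dec c (QcR j));
  destruct (Rlt_le_dec (QcR i) c); destruct (Rlt_le_dec (QcR j) c);
  try lra; exfalso; apply H'; exists c; split; auto; lra.
Qed.

Lemma simC_between C i j : simC C i j -> QcR i < QcR j ->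
  forall c, In c C -> c < QcR i \/ QcR j < c.
Proof.
  intros H Hlt c Hc. destruct (H c Hc) as [[H1 H2] [H3 H4]].
  destruct (Rlt_le_dec c (QcR i)); auto.
  destruct (Rlt_le_dec (QcR j) c); auto.
  assert (c <= QcR i) by (apply H2; lra). assert (QcR j <= c) by (apply H3; lra). lra.
Qed.

Lemma simC_sym C i j : simC C i j -> simC C j i.
Proof. intros H c Hc. specialize (H c Hc). tauto. Qed.

Lemma simC_app_l C B i j : simC (C ++ B) i j -> simC C i j.
Proof. intros H c Hc. apply H, in_or_app; auto. Qed.

Definition flips (f : Qc -> Prop) (c : R) : Prop :=
  forall eps, 0 < eps -> exists u u' : Qc,
    Rabs (QcR u - c) < eps /\ Rabs (QcR u' - c) < eps /\ ~ (f u <-> f u').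

Definition locally_constant (f : Qc -> Prop) (c : R) : Prop :=
  exists eps, 0 < eps /\ forall u u' : Qc,
    Rabs (QcR u - c) < eps -> Rabs (QcR u' - c) < eps -> (f u <-> f u').

Lemma not_flips_locally_constant f c : ~ flips f c -> locally_constant f c.
Proof.
  intro Hn. apply NNPP. intro Hnc. apply Hn. intros eps Heps. apply NNPP. intro Hno.
  apply Hnc. exists eps. split; auto. intros u u' Hu Hu'. apply NNPP. intro Hd.
  apply Hno. exists u, u'. auto.
Qed.

Lemma drop_locally_constant_point (f : Qc -> Prop) (c : R) (D : list R) :
  (forall q q', simC (c :: D) q q' -> (f q <-> f q')) -> locally_constant f c ->
  forall q q', simC D q q' -> (f q <-> f q').
Proof.
  intros H [eps [He Heps]].
  (* between q < q' there is no point of D, so points there on the same side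
     of c are ~_(c::D)-equivalent *)
  assert (key : forall q q', simC D q q' -> QcR q < QcR q' -> (f q <-> f q')).
  { intros q q' Hs Hlt. pose proof (simC_between D q q' Hs Hlt) as Hout.
    assert (Hsim : forall u v, QcR q <= QcR u <= QcR q' -> QcR q <= QcR v <= QcR q' ->
              ((c < QcR u /\ c < QcR v) \/ (QcR u < c /\ QcR v < c)) -> (f u <-> f v)).
    { intros u v Hu Hv Huv. apply H, simC_sep. intros x [<-|Hx]; [lra|].
      destruct (Hout x Hx); lra. }
    destruct (Rlt_le_dec c (QcR q)) as [Hc1|Hc1]; [apply Hsim; lra|].
    destruct (Rlt_le_dec (QcR q') c) as [Hc2|Hc2]; [apply Hsim; lra|].
    assert (Hu : exists u, (f q <-> f u) /\ Rabs (QcR u - c) < eps).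
    { destruct (Req_dec (QcR q) c) as [Eq|Nq].
      - exists q. split; [tauto|]. rewrite Eq, Rminus_diag, Rabs_R0; lra.
      - destruct (Qc_dense (Rmax (QcR q) (c - eps)) c) as [u Hu];
          [apply Rmax_lub_lt; lra|].
        pose proof (Rmax_l (QcR q) (c - eps)). pose proof (Rmax_r (QcR q) (c - eps)).
        exists u. split; [apply Hsim; lra | apply Rabs_def1; lra]. }
    assert (Hv : exists v, (f v <-> f q') /\ Rabs (QcR v - c) < eps).
    { destruct (Req_dec (QcR q') c) as [Eq|Nq].
      - exists q'. split; [tauto|]. rewrite Eq, Rminus_diag, Rabs_R0; lra.
      - destruct (Qc_dense c (Rmin (QcR q') (c + eps))) as [v Hv];
          [apply Rmin_glb_lt; lra|].
        pose proof (Rmin_l (QcR q') (c + eps)). pose proof (Rmin_r (QcR q') (c + eps)).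
        exists v. split; [apply Hsim; lra | apply Rabs_def1; lra]. }
    destruct Hu as [u [E1 Hu]], Hv as [v [E2 Hv]].
    pose proof (Heps u v Hu Hv). tauto. }
  intros q q' Hs. destruct (Rtotal_order (QcR q) (QcR q')) as [Hlt|[Heq|Hgt]].
  - auto.
  - apply H, simC_eq; auto.
  - symmetry. apply key; auto. apply simC_sym; auto.
Qed.

Lemma drop_unflipped_points (f : Qc -> Prop) (B : list R) : forall C,
  (forall q q', simC (C ++ B) q q' -> (f q <-> f q')) ->
  (forall c, In c C -> ~ In c B -> ~ flips f c) ->
  forall q q', simC B q q' -> (f q <-> f q').
Proof.
  induction C as [|c C IH]; intros H Hnb; [exact H|].
  apply IH; [|intros c0 Hc0; apply Hnb; simpl; auto].
  destruct (classic (In c B)) as [HB|HB].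
  - intros q q' Hs. apply H. intros x [<-|Hx]; apply Hs; auto. apply in_or_app; auto.
  - apply (drop_locally_constant_point f c (C ++ B)); auto.
    apply not_flips_locally_constant, Hnb; simpl; auto.
Qed.

End Reals.

(** * Squeezing Q into a neighbourhood of a real *)

Section Windows.
Local Open Scope R_scope.

Definition same_side (c x y : R) : Prop := (c < x /\ c < y) \/ (x < c /\ y < c) \/ x = y.

Record IsWindow (c r t : R) (h : Qc -> Qc) : Prop := {
  window_increasing : forall q q', Qclt q q' -> Qclt (h q) (h q');
  window_near : forall q, Rabs (QcR (h q) - c) < r;
  window_right : forall q, t + 9 <= QcR q -> c < QcR (h q);
  window_left : forall q, QcR q <= t - 9 -> QcR (h q) < c;
  window_realises : forall u : Qc, exists w : Qc,
    t - 1 <= QcR w <= t + 1 /\ same_side c (QcR u) (QcR (h w)) }.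

(* Take h q = al + beta * G (q - t), with beta rational and small, al a
   rational approximation of c, equal to c when c is rational. *)
Lemma window_exists (c r : R) (t : Q) : 0 < r -> exists h, IsWindow c r (Q2R t) h.
Proof.
  intro Hr.
  destruct (Q_dense 0 (r / 2)) as [beta [Hb1 Hb2]]; [lra|].
  set (B := Q2R beta) in *.
  assert (Hal : exists al : Q, Rabs (Q2R al - c) < B / 4 /\
                 ((exists u : Q, Q2R u = c) -> Q2R al = c)).
  { destruct (classic (exists u : Q, Q2R u = c)) as [[u Hu]|Hn].
    - exists u. split; [rewrite Hu, Rminus_diag, Rabs_R0; lra | auto].
    - destruct (Q_dense (c - B / 4) (c + B / 4)) as [al Hal]; [lra|].
      exists al. split; [apply Rabs_def1; lra | intro; contradiction]. }
  destruct Hal as [al [Hal Hrat]]. pose proof (Rabs_def2 _ _ Hal) as Hal'.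
  set (h := fun q : Qc => Q2Qc (al + beta * Gq (this q - t))%Q).
  assert (Hh : forall q, QcR (h q) = Q2R al + B * Gr (QcR q - Q2R t)).
  { intro q. unfold h. rewrite QcR_Q2Qc, Q2R_plus, Q2R_mult, Q2R_Gq, Q2R_minus. reflexivity. }
  assert (Hpt : forall s : Q, QcR (h (Q2Qc (t + s))) = Q2R al + B * Gr (Q2R s)).
  { intro s. rewrite Hh, QcR_Q2Qc, Q2R_plus. f_equal. f_equal. f_equal. ring. }
  exists h. constructor.
  - intros q q' Hq. apply Qclt_R. rewrite !Hh. apply Qlt_Rlt in Hq.
    pose proof (Gr_mono (QcR q - Q2R t) (QcR q' - Q2R t)). unfold QcR in *. nra.
  - intro q. rewrite Hh. pose proof (Gr_bounds (QcR q - Q2R t)). apply Rabs_def1; nra.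
  - intros q Hq. rewrite Hh. pose proof (Gr_big (QcR q - Q2R t)). nra.
  - intros q Hq. rewrite Hh. pose proof (Gr_small (QcR q - Q2R t)). nra.
  - intro u. destruct (Rtotal_order (QcR u) c) as [Hlt|[Heq|Hgt]].
    + exists (Q2Qc (t + -1)). rewrite QcR_Q2Qc, Q2R_plus, Hpt.
      replace (Q2R (-1)) with (-1) by (unfold Q2R; simpl; lra). rewrite Gr_m1.
      split; [lra|]. right; left. lra.
    + exists (Q2Qc (t + 0)). rewrite QcR_Q2Qc, Q2R_plus, Hpt.
      replace (Q2R 0) with 0 by (unfold Q2R; simpl; lra). rewrite Gr_0.
      split; [lra|]. right; right. rewrite Hrat; [lra|]. exists (this u). exact Heq.
    + exists (Q2Qc (t + 1)). rewrite QcR_Q2Qc, Q2R_plus, Hpt, Q2R_1, Gr_1.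
      split; [lra|]. left. lra.
Qed.

Lemma invariant_near_center (f : Qc -> Prop) C c r :
  (forall q q', simC C q q' -> (f q <-> f q')) ->
  (forall x, In x C -> x <> c -> r <= Rabs (x - c)) ->
  forall q q', Rabs (QcR q - c) < r -> Rabs (QcR q' - c) < r ->
  same_side c (QcR q) (QcR q') -> (f q <-> f q').
Proof.
  intros HC Hr q q' Hq Hq' Hs. apply HC.
  destruct Hs as [Hs|[Hs|Hs]]; [| |now apply simC_eq].
  all: apply Rabs_def2 in Hq; apply Rabs_def2 in Hq'; apply simC_sep; intros x Hx;
    destruct (Req_dec x c) as [->|Hne]; [lra|];
    specialize (Hr x Hx Hne); unfold Rabs in Hr; destruct (Rcase_abs (x - c)); lra.
Qed.

Lemma exists_radius (D : list R) :
  exists r, 0 < r /\ forall x, In x D -> x <> 0 -> 2 * r < Rabs x.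
Proof.
  induction D as [|x D [r [Hr HD]]].
  - exists 1. split; [lra | intros x []].
  - destruct (Req_dec x 0) as [->|Hx].
    + exists r. split; auto. intros y [<-|Hy] Hne; [contradiction | auto].
    + pose proof (Rabs_pos_lt x Hx).
      exists (Rmin r (Rabs x / 4)). pose proof (Rmin_l r (Rabs x / 4)).
      pose proof (Rmin_r r (Rabs x / 4)). split; [apply Rmin_glb_lt; lra|].
      intros y [<-|Hy] Hne; [lra|]. specialize (HD y Hy Hne). lra.
Qed.

Definition in_window (j : nat) (x : R) : Prop := 10 * INR j - 1 <= x <= 10 * INR j + 1.

Lemma meets_windows_length (C : list R) (n : nat) :
  (forall j, (j <= n)%nat -> exists y, In y C /\ in_window j y) -> (S n <= length C)%nat.
Proof.
  intro H.
  assert (G : forall N, (N <= S n)%nat -> exists l, length l = N /\ NoDup l /\ incl l C /\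
               forall y, In y l -> y < 10 * INR N - 1).
  { induction N as [|N IH]; intros HN.
    - exists nil. split; [reflexivity|]. split; [constructor|]. split; intros y [].
    - destruct IH as [l [H1 [H2 [H3 H4]]]]; [lia|].
      destruct (H N ltac:(lia)) as [y [Hy1 Hy2]]. unfold in_window in Hy2.
      exists (y :: l). repeat split.
      + simpl; lia.
      + constructor; auto. intro Hin. specialize (H4 y Hin). lra.
      + intros z [<-|Hz]; auto.
      + rewrite S_INR. intros z [<-|Hz]; [lra|]. specialize (H4 z Hz). lra. }
  destruct (G (S n) (Nat.le_refl _)) as [l [H1 [H2 [H3 _]]]].
  rewrite <- H1. apply NoDup_incl_length; auto.
Qed.

Definition increasing_chain (c : nat -> R) (n : nat) : Prop :=
  forall j l, (j < l)%nat -> (l <= n)%nat -> c j < c l.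

(* A set of reals without increasing chains c_0 < ... < c_n is listed by a
   list of length <= n: its non-maximal elements have no chains of length n,
   and it has at most one maximal element. *)
Lemma few_points_listable (P : R -> Prop) (n : nat) :
  (forall c, increasing_chain c n -> ~ (forall j, (j <= n)%nat -> P (c j))) ->
  exists B, (length B <= n)%nat /\ forall x, P x -> In x B.
Proof.
  revert P; induction n as [|n IH]; intros P Hno.
  - exists nil. split; [simpl; lia|]. intros x Hx. exfalso.
    apply (Hno (fun _ => x)); [intros j l; lia | intros; exact Hx].
  - set (P' := fun x => P x /\ exists y, P y /\ x < y).
    destruct (IH P') as [B' [HB'1 HB'2]].
    { intros c Hc Hall. destruct (Hall n (le_n n)) as [_ [y [Hy Hny]]].
      apply (Hno (fun j => if (j <=? n)%nat then c j else y)).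
      - intros j l Hjl Hl. destruct (Nat.leb_spec j n), (Nat.leb_spec l n); try lia.
        + apply Hc; lia.
        + destruct (Nat.eq_dec j n) as [->|]; [exact Hny|].
          apply Rlt_trans with (c n); auto. apply Hc; lia.
      - intros j Hj. destruct (Nat.leb_spec j n); [apply Hall; auto | exact Hy]. }
    destruct (classic (exists x, P x /\ ~ P' x)) as [[x [Hx Hmax]]|Hnone].
    + exists (x :: B'). split; [simpl; lia|]. intros z Hz.
      destruct (classic (P' z)) as [HP'|HP']; [right; auto|left].
      destruct (Rtotal_order x z) as [Hlt|[Heq|Hgt]]; auto; exfalso;
        [apply Hmax | apply HP']; split; eauto.
    + exists B'. split; [lia|]. intros z Hz. apply HB'2.
      apply NNPP; intro; apply Hnone; eauto.
Qed.

End Windows.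

(** * The order-theoretic core: parities of flipping predicates on windows *)

Section ParityWindows.
Local Open Scope R_scope.

Variables (n : nat) (c : nat -> R) (r : R) (f : nat -> Qc -> Prop)
  (Cs : nat -> list R) (h : nat -> Qc -> Qc).
Hypothesis r_pos : 0 < r.
Hypothesis f_invariant :
  forall l, (l <= n)%nat -> forall q q', simC (Cs l) q q' -> (f l q <-> f l q').
Hypothesis Cs_far :
  forall l, (l <= n)%nat -> forall x, In x (Cs l) -> x <> c l -> r <= Rabs (x - c l).
Hypothesis f_flips : forall l, (l <= n)%nat -> flips (f l) (c l).
Hypothesis h_window : forall l, (l <= n)%nat -> IsWindow (c l) r (10 * INR l) (h l).

(* On window j, the maps h l with l <> j stay on one side of c l. *)
Lemma other_blocks_constant j l w w' : (l <= n)%nat -> l <> j ->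
  in_window j (QcR w) -> in_window j (QcR w') -> (f l (h l w) <-> f l (h l w')).
Proof.
  intros Hl Hlj Hw Hw'. destruct (h_window l Hl) as [_ Hnear Hright Hleft _].
  apply (invariant_near_center (f l) (Cs l) (c l) r (f_invariant l Hl) (Cs_far l Hl)); auto.
  unfold in_window in *.
  destruct (lt_dec l j) as [Hlt|Hge].
  - assert (INR l + 1 <= INR j) by (rewrite <- S_INR; apply le_INR; lia).
    left. split; apply Hright; lra.
  - assert (INR j + 1 <= INR l) by (rewrite <- S_INR; apply le_INR; lia).
    right; left. split; apply Hleft; lra.
Qed.

Lemma own_block_flips j : (j <= n)%nat -> exists w1 w2,
  in_window j (QcR w1) /\ in_window j (QcR w2) /\ ~ (f j (h j w1) <-> f j (h j w2)).
Proof.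
  intro Hj. destruct (h_window j Hj) as [_ Hnear _ _ Hrealises].
  destruct (f_flips j Hj r r_pos) as [u [u' [Hu [Hu' Hdiff]]]].
  destruct (Hrealises u) as [w1 [Hw1 Hs1]], (Hrealises u') as [w2 [Hw2 Hs2]].
  exists w1, w2. split; [exact Hw1|]. split; [exact Hw2|].
  pose proof (invariant_near_center (f j) (Cs j) (c j) r (f_invariant j Hj) (Cs_far j Hj))
    as Hconst.
  assert (E1 : f j u <-> f j (h j w1)) by (apply Hconst; auto).
  assert (E2 : f j u' <-> f j (h j w2)) by (apply Hconst; auto).
  tauto.
Qed.

Lemma parity_invariance_meets_windows (C : list R) :
  (forall q q', simC C q q' ->
     (parity (fun l => f l (h l q)) (S n) <-> parity (fun l => f l (h l q')) (S n))) ->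
  forall j, (j <= n)%nat -> exists y, In y C /\ in_window j y.
Proof.
  intros HC j Hj. destruct (own_block_flips j Hj) as [w1 [w2 [Hw1 [Hw2 Hd]]]].
  assert (Hns : ~ simC C w1 w2).
  { intro Hs. apply (parity_single_change (fun l => f l (h l w1)) (fun l => f l (h l w2)) (S n) j);
      [lia| |exact Hd | exact (HC _ _ Hs)].
    intros l Hl Hlj. apply (other_blocks_constant j); auto; lia. }
  destruct (not_simC _ _ _ Hns) as [y [Hy Hbetween]].
  exists y. split; auto. unfold in_window in *; lra.
Qed.

End ParityWindows.

(** * Breakpoints of an indiscernible sequence over a *)

Lemma bounded_choice {A : Type} (x0 : A) (n : nat) (P : nat -> A -> Prop) :
  (forall j, j <= n -> exists x, P j x) -> exists g, forall j, j <= n -> P j (g j).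
Proof.
  intro H. destruct (choice (fun j x => j <= n -> P j x)) as [g Hg]; [|eauto].
  intro j. destruct (le_lt_dec j n) as [Hj|Hj].
  - destruct (H j Hj) as [x Hx]. eauto.
  - exists x0. lia.
Qed.

Lemma separating_radius (n : nat) (c : nat -> R) (Cs : nat -> list R) :
  increasing_chain c n -> exists r, (0 < r)%R /\
  (forall l, l <= n -> forall x, In x (Cs l) -> x <> c l -> (r <= Rabs (x - c l))%R) /\
  (forall j l, j < l -> l <= n -> (c j + 2 * r < c l)%R).
Proof.
  intro Hc.
  set (D := flat_map (fun j => map (fun x => (x - c j)%R) (Cs j ++ map c (seq 0 (S n))))
              (seq 0 (S n))).
  destruct (exists_radius D) as [r [Hr Hrad]].
  assert (HD : forall j x, j <= n -> In x (Cs j ++ map c (seq 0 (S n))) -> In (x - c j)%R D).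
  { intros j x Hj Hx. apply in_flat_map. exists j. split; [apply in_seq; lia|].
    apply (in_map (fun y => (y - c j)%R)); auto. }
  exists r. split; [exact Hr|]. split.
  - intros l Hl x Hx Hne. assert (x - c l <> 0)%R by lra.
    specialize (Hrad _ (HD l x Hl ltac:(apply in_or_app; auto)) ltac:(auto)). lra.
  - intros j l Hjl Hl. pose proof (Hc j l Hjl Hl).
    assert (Hin : In (c l - c j)%R D).
    { apply HD; [lia|]. apply in_or_app; right. apply in_map, in_seq; lia. }
    specialize (Hrad _ Hin ltac:(lra)). rewrite Rabs_right in Hrad; lra.
Qed.

Lemma window_family (n : nat) (c : nat -> R) (r : R) : (0 < r)%R ->
  exists h, forall l, l <= n -> IsWindow (c l) r (10 * INR l) (h l).
Proof.
  intro Hr. apply (bounded_choice (fun q : Qc => q) n (fun l h => IsWindow (c l) r (10 * INR l) h)).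
  intros l _.
  replace (10 * INR l)%R with (Q2R (inject_Z (Z.of_nat (10 * l)))).
  - apply window_exists; auto.
  - rewrite Q2R_inject, mult_INR. simpl. lra.
Qed.

Lemma indiscernible_windows {L} (M : Structure L) n (c : nat -> R) r h m b :
  indiscernible M m b ->
  (forall l, l <= n -> IsWindow (c l) r (10 * INR l) (h l)) ->
  (forall j l, j < l -> l <= n -> (c j + 2 * r < c l)%R) ->
  indiscernible M (S n * m) (interleave M m b h).
Proof.
  intros Hb Hh Hsep. apply indiscernible_interleave; auto.
  - intros l q q' Hl. apply (window_increasing _ _ _ _ (Hh l ltac:(lia))).
  - intros l l' q q' Hll' Hl'. apply Qclt_R.
    pose proof (Rabs_def2 _ _ (window_near _ _ _ _ (Hh l ltac:(lia)) q)).
    pose proof (Rabs_def2 _ _ (window_near _ _ _ _ (Hh l' ltac:(lia)) q')).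
    pose proof (Hsep l l' Hll' ltac:(lia)). lra.
Qed.

Section Breakpoints.
Context {L : Lang} (M : Structure L) (k : nat) (a : nat -> M) (n : nat).

Definition truth (b : Qc -> nat -> M) (psi : formula L) (q : Qc) : Prop :=
  sat M (env k a (b q)) psi.

Definition breakpoint (m : nat) (b : Qc -> nat -> M) (c : R) : Prop :=
  exists psi, fbound (k + m) psi /\ flips (truth b psi) c.

Hypothesis local_rank : forall m (phi : formula L), fbound (k + m) phi ->
  forall b, indiscernible M m b -> exists C : list R, length C <= n /\
    forall i j, simC C i j -> (truth b phi i <-> truth b phi j).

Lemma no_long_breakpoint_chain m b (c : nat -> R) :
  indiscernible M m b -> increasing_chain c n ->
  ~ (forall j, j <= n -> breakpoint m b (c j)).
Proof.
  intros Hb Hc Hbr.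
  destruct (bounded_choice FFalse n _ Hbr) as [psi Hpsi].
  destruct (bounded_choice nil n (fun j C => forall q q', simC C q q' ->
              (truth b (psi j) q <-> truth b (psi j) q'))) as [Cs HCs].
  { intros j Hj. destruct (local_rank m (psi j) (proj1 (Hpsi j Hj)) b Hb) as [C [_ HC]].
    eauto. }
  destruct (separating_radius n c Cs Hc) as [r [Hr [Hfar Hsep]]].
  destruct (window_family n c r Hr) as [h Hh].
  pose proof (indiscernible_windows M n c r h m b Hb Hh Hsep) as Hb'.
  set (Psi := Fparity (fun l => frename (block_shift k m l) (psi l)) (S n)).
  assert (HPsi : fbound (k + S n * m) Psi).
  { apply fbound_Fparity. intros l Hl. apply fbound_block_shift; auto.
    apply Hpsi; lia. }
  assert (Htruth : forall q, truth (interleave M m b h) Psi q <->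
                     parity (fun l => truth b (psi l) (h l q)) (S n)).
  { intro q. unfold truth, Psi. rewrite sat_Fparity. apply parity_ext. intros l Hl.
    apply (sat_block_shift M k m l a (fun l t => b (h l q) t)). apply Hpsi; lia. }
  destruct (local_rank _ Psi HPsi _ Hb') as [C [HlenC HC]].
  assert (Hmeet : forall j, j <= n -> exists y, In y C /\ in_window j y).
  { apply (parity_invariance_meets_windows n c r (fun l => truth b (psi l)) Cs h); auto.
    - intros l Hl. apply Hpsi; auto.
    - intros q q' Hs. rewrite <- !Htruth. auto. }
  pose proof (meets_windows_length C n Hmeet). lia.
Qed.

End Breakpoints.

Theorem proposition2p3 (L : Lang) (M : Structure L) (k : nat) (p : ptype M) (n : nat) :
  dp_rank_le M k p n <->
  (forall (m : nat) (phi : formula L), fbound (k + m) phi -> local_dp_rank_le M k m phi p n).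
Proof.
  split.
  - intros Hdp m phi Hphi a Ha b Hb.
    destruct (Hdp a Ha m b Hb) as [C [Hl HC]]. exists C. split; auto.
    intros i j Hs. apply (HC i j Hs); auto.
  - intros Hloc a Ha m b Hb.
    destruct (few_points_listable (breakpoint M k a m b) n) as [B [HlenB HB]].
    { intros c Hc. apply (no_long_breakpoint_chain M k a n); auto.
      intros m' phi Hphi b' Hb'. exact (Hloc m' phi Hphi a Ha b' Hb'). }
    exists B. split; auto.
    (* each psi is invariant under ~_C for its local witness C, and the
       points of C outside B are not breakpoints *)
    intros i j Hs psi Hpsi.
    destruct (Hloc m psi Hpsi a Ha b Hb) as [C [_ HC]].
    apply (drop_unflipped_points (truth M k a b psi) B C); auto.
    + intros q q' Hq. apply HC. eapply simC_app_l; eauto.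
    + intros c Hc HnB Hfl. apply HnB, HB. exists psi. auto.
Qed.
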